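(* Let $\rho>0$ and $n\in\mathbb N$, and put $b_n=(2^n-1)\rho^{-n}$ if $\rho\le1$ and $b_n=2^n-1$ if $\rho\ge1$. Then for every $\varepsilon=(\varepsilon_1,\dots,\varepsilon_n)\in\mathbb C^n$ there exist $s\in\mathbb N$, $\mu_1,\dots,\mu_s\in\mathbb C$ with $|\mu_j|=\rho$, and $\alpha_1,\dots,\alpha_s\ge0$ such that $$\sum_{j=1}^s\alpha_j\le b_n\|\varepsilon\|\qquad\text{and}\qquad\sum_{j=1}^s\alpha_j\mu_j^k=\varepsilon_k\quad(1\le k\le n).$$
   Context: $\|\varepsilon\|=\max_{1\le k\le n}|\varepsilon_k|$. *)

(* Complex numbers: an arbitrary numClosedFieldType C
   (algebraically closed field with conjugation and norm, e.g. algC; the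
   paper's C is an instance). *)
From HB Require Import structures.
From mathcomp Require Import all_boot all_order all_algebra.
Set Implicit Arguments. Unset Strict Implicit. Unset Printing Implicit Defensive.
Import Order.TTheory GRing.Theory Num.Theory.
Local Open Scope ring_scope.

Definition maxC (C : numClosedFieldType) (x y : C) : C := if x <= y then y else x.

Definition supnorm (C : numClosedFieldType) (n : nat) (eps : 'I_n -> C) : C :=
  \big[@maxC C/0]_(k < n) `|eps k|.

Definition bn (C : numClosedFieldType) (n : nat) (rho : C) : C :=
  if rho <= 1 then (2 ^+ n - 1) / rho ^+ n else 2 ^+ n - 1.

(* If |eps_k| <= K rho^k for k <= n, a measure with mass
   at most (2^n - 1) K matching the first n moments exists: the (n+1)-st moment
   is corrected, without disturbing the lower ones, by equal weights at the
   points mu z^j (z a primitive (n+1)-st root of unity, |mu| = rho), whose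
   moments of order 1..n vanish.  The residual to correct is at most
   (K + mass) rho^(n+1), so the mass becomes at most 2 mass + K.  Choosing
   K = ||eps|| rho^-n for rho <= 1 and K = ||eps|| for rho >= 1 gives b_n. *)
From Pilot Require Import Defs.
From mathcomp Require Import all_boot all_order all_algebra.
From mathcomp Require Import cyclic separable cyclotomic ring.
Set Implicit Arguments.
Unset Strict Implicit.
Unset Printing Implicit Defensive.
Import Order.TTheory GRing.Theory Num.Theory.
Local Open Scope ring_scope.

Lemma closed_field_prim_root_exists (F : closedFieldType) (d : nat) :
  d%:R != 0 :> F -> exists z : F, d.-primitive_root z.
Proof.
move=> dF; have d_gt0 : (0 < d)%N by rewrite lt0n; apply: contraNneq dF => ->.
have [r Dp] := closed_field_poly_normal ('X^d - 1 : {poly F}).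
rewrite (monicP _) ?monicXnsubC // scale1r in Dp.
have r_unity : all d.-unity_root r by apply/allP=> z; rewrite -root_prod_XsubC -Dp.
have size_r : (d < (size r).+1)%N by rewrite -(size_prod_XsubC r id) -Dp size_XnsubC.
have r_uniq : uniq r by rewrite -separable_prod_XsubC -Dp separable_Xn_sub_1.
by have [z] := hasP (has_prim_root d_gt0 r_unity r_uniq size_r); exists z.
Qed.

Lemma sum_unity_root_expr_eq0 (R : idomainType) d (z : R) :
  z ^+ d = 1 -> z != 1 -> \sum_(j < d) z ^+ j = 0.
Proof.
move=> zd z_neq1; apply/eqP; move: (subrX1 z d).
rewrite zd subrr => /esym/eqP; rewrite mulf_eq0 subr_eq0.
by rewrite (negbTE z_neq1).
Qed.

Lemma norm_unity_root (R : numDomainType) d (z : R) :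
  (0 < d)%N -> z ^+ d = 1 -> `|z| = 1.
Proof.
move=> d_gt0 zd; apply/eqP.
by rewrite -(eqrXn2 d_gt0) ?normr_ge0 // -normrX zd expr1n normr1.
Qed.

Section CircleAtoms.
Variables (C : numClosedFieldType) (rho : C).
Hypothesis rho_gt0 : 0 < rho.

(* Finite measures are lists of (weight, atom) pairs. *)
Definition on_circle (l : seq (C * C)) :=
  all (fun a => (0 <= a.1) && (`|a.2| == rho)) l.
Definition mass (l : seq (C * C)) := \sum_(a <- l) a.1.
Definition moment (l : seq (C * C)) (m : nat) := \sum_(a <- l) a.1 * a.2 ^+ m.

Lemma norm_moment_le l m : on_circle l -> `|moment l m| <= mass l * rho ^+ m.
Proof.
move=> /allP l_on; rewrite /moment /mass mulr_suml.
apply: le_trans (ler_norm_sum _ _ _) _; rewrite !big_seq; apply: ler_sum => a la.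
have /andP[a1_ge0 /eqP a2_rho] := l_on a la.
by rewrite normrM normrX a2_rho ger0_norm.
Qed.

Definition rotated_roots (w mu z : C) d := mkseq (fun j => (w, mu * z ^+ j)) d.

Lemma mass_rotated_roots w mu z d : mass (rotated_roots w mu z d) = w *+ d.
Proof.
rewrite /mass big_map -[d in iota 0 d]subn0 -/(index_iota 0 d).
by rewrite sumr_const_nat subn0.
Qed.

Lemma moment_rotated_roots w mu z d m :
  moment (rotated_roots w mu z d) m = w * mu ^+ m * \sum_(j < d) (z ^+ m) ^+ j.
Proof.
rewrite /moment big_map -[d in iota 0 d]subn0 -/(index_iota 0 d) big_mkord.
rewrite mulr_sumr.
by apply: eq_bigr => j _; rewrite exprMn -!exprM mulnC mulrA.
Qed.

(* Spread [c] evenly over a rotated copy of the [d]-th roots of unity: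
   the moments of order [0 < m < d] cancel and only the [d]-th survives. *)
Lemma exists_atoms_single_moment d (c : C) : (0 < d)%N ->
  exists l, [/\ on_circle l, mass l = `|c| / rho ^+ d,
    forall m, (0 < m < d)%N -> moment l m = 0 & moment l d = c].
Proof.
move=> d_gt0; have [->|c_neq0] := eqVneq c 0.
  exists [::]; rewrite /mass /moment !big_nil normr0 mul0r.
  by split=> // m _; rewrite big_nil.
have dC : d%:R != 0 :> C by rewrite pnatr_eq0 -lt0n.
have [z z_prim] := closed_field_prim_root_exists dC.
have zd := prim_expr_order z_prim.
pose mu := d.-root (rho ^+ d * (c / `|c|)).
have mud : mu ^+ d = rho ^+ d * (c / `|c|) by rewrite rootCK.
have norm_mu : `|mu| = rho.
  rewrite norm_rootC normrM normrX gtr0_norm // normf_div normr_id.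
  by rewrite divff ?normr_eq0 // mulr1 exprCK // ltW.
pose w := `|c| / (d%:R * rho ^+ d).
exists (rotated_roots w mu z d); split.
- apply/allP => _ /mapP[j _ ->] /=.
  rewrite divr_ge0 ?normr_ge0 ?mulr_ge0 ?ler0n ?exprn_ge0 ?ltW //=.
  by rewrite normrM normrX (norm_unity_root d_gt0 zd) expr1n mulr1 norm_mu.
- rewrite mass_rotated_roots /w -mulr_natr.
  by field; rewrite dC expf_neq0 ?gt_eqF.
- move=> m /andP[m_gt0 m_lt_d]; rewrite moment_rotated_roots.
  rewrite sum_unity_root_expr_eq0 ?mulr0 // -?(prim_order_dvd z_prim) ?gtnNdvd //.
  by rewrite -exprM mulnC exprM zd expr1n.
- rewrite moment_rotated_roots zd.
  under eq_bigr do rewrite expr1n.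
  rewrite sumr_const card_ord mud /w.
  by field; rewrite dC normr_eq0 c_neq0 expf_neq0 ?gt_eqF.
Qed.

Lemma exists_atoms_moments n (e : nat -> C) K : 0 <= K ->
  (forall m, (0 < m <= n)%N -> `|e m| <= K * rho ^+ m) ->
  exists l, [/\ on_circle l, mass l <= (2 ^+ n - 1) * K &
    forall m, (0 < m <= n)%N -> moment l m = e m].
Proof.
move=> K_ge0; elim: n => [|n IHn] e_le.
  exists [::]; rewrite /mass big_nil expr0 subrr mul0r.
  by split=> // m; rewrite ltnNge; case: leqP.
have [l1 [l1_on l1_mass l1_mom]] : exists l, [/\ on_circle l,
    mass l <= (2 ^+ n - 1) * K & forall m, (0 < m <= n)%N -> moment l m = e m].
  by apply: IHn => m /andP[m_gt0 m_le]; rewrite e_le ?m_gt0 ?(leq_trans m_le).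
pose r := e n.+1 - moment l1 n.+1.
have [l2 [l2_on l2_mass l2_low l2_top]] := exists_atoms_single_moment r (ltn0Sn n).
have r_le : `|r| / rho ^+ n.+1 <= K + (2 ^+ n - 1) * K.
  apply: le_trans (_ : _ <= K + mass l1) _; last by rewrite lerD2l.
  rewrite ler_pdivrMr ?exprn_gt0 // mulrDl.
  by rewrite (le_trans (ler_normB _ _)) // lerD ?e_le ?norm_moment_le /=.
exists (l1 ++ l2); split.
- by rewrite /on_circle all_cat; apply/andP.
- rewrite /mass big_cat /= -/(mass l1) -/(mass l2) l2_mass.
  suff -> : (2 ^+ n.+1 - 1) * K = (2 ^+ n - 1) * K + (K + (2 ^+ n - 1) * K).
    exact: lerD.
  by rewrite exprS; ring.
- move=> m /andP[m_gt0 m_le].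
  rewrite /moment big_cat /= -/(moment l1 m) -/(moment l2 m).
  have [m_lt|m_ge] := ltnP m n.+1.
    by rewrite l2_low ?m_gt0 // addr0 l1_mom // m_gt0 -ltnS.
  have -> : m = n.+1 by apply/eqP; rewrite eqn_leq m_le.
  by rewrite l2_top addrC subrK.
Qed.

End CircleAtoms.

Lemma le_maxCl (C : numClosedFieldType) (x y : C) : x <= Defs.maxC x y.
Proof. by rewrite /Defs.maxC; case: ifP. Qed.

Lemma le_maxCr (C : numClosedFieldType) (x y : C) :
  x \is Num.real -> y \is Num.real -> y <= Defs.maxC x y.
Proof.
move=> xR yR; rewrite /Defs.maxC; case: ifP => // /negbT.
by rewrite real_leNgt // negbK => /ltW.
Qed.

Lemma bigmaxC_norm_ge0 (C : numClosedFieldType) (I : Type) (r : seq I) (F : I -> C) :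
  0 <= \big[@Defs.maxC C/0]_(i <- r) `|F i|.
Proof.
apply: (big_ind (fun x => 0 <= x)) => // x y x_ge0 _.
exact: le_trans (le_maxCl x y).
Qed.

Lemma norm_le_supnorm (C : numClosedFieldType) n (eps : 'I_n -> C) k :
  `|eps k| <= supnorm eps.
Proof.
rewrite /supnorm; elim: (index_enum _) (mem_index_enum k) => // i r IHr.
rewrite big_cons inE => /predU1P[<-|k_r]; first exact: le_maxCl.
by apply: le_trans (IHr k_r) (le_maxCr _ _); rewrite ger0_real ?bigmaxC_norm_ge0.
Qed.

Lemma le_bn_scale (C : numFieldType) (rho S : C) m n : 0 < rho -> 0 <= S ->
  (m <= n)%N -> S <= (if rho <= 1 then S / rho ^+ n else S) * rho ^+ m.
Proof.
move=> rho_gt0 S_ge0 m_le_n; case: ifP => rho_le1.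
  rewrite mulrAC ler_pdivlMr ?exprn_gt0 // ler_wpM2l //.
  exact: (ler_wiXn2l (ltW rho_gt0) rho_le1).
have rho_gt1 : 1 < rho by move/negbT: rho_le1; rewrite -real_ltNge ?gtr0_real.
by rewrite ler_peMr // exprn_ege1 ?ltW.
Qed.

Theorem lemma4p8 (C : numClosedFieldType) (rho : C) (n : nat)
    (eps : 'I_n -> C) :
  0 < rho ->
  exists (s : nat) (mu : 'I_s -> C) (alpha : 'I_s -> C),
    (forall j, `|mu j| = rho) /\
    (forall j, 0 <= alpha j) /\
    \sum_(j < s) alpha j <= bn n rho * supnorm eps /\
    (forall k : 'I_n, \sum_(j < s) alpha j * mu j ^+ k.+1 = eps k).
Proof.
move=> rho_gt0; pose S := supnorm eps.
have S_ge0 : 0 <= S := bigmaxC_norm_ge0 _ _.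
pose K := if rho <= 1 then S / rho ^+ n else S.
pose e m := if m is k.+1 then oapp eps 0 (insub k) else 0.
have e_le m : (0 < m <= n)%N -> `|e m| <= K * rho ^+ m.
  case/andP=> _ m_le_n; apply: le_trans (le_bn_scale rho_gt0 S_ge0 m_le_n).
  case: m {m_le_n} => [|m] /=; first by rewrite normr0.
  by case: (insub m) => [k|] /=; rewrite ?normr0 //; apply: norm_le_supnorm.
have K_ge0 : 0 <= K.
  by rewrite /K; case: ifP => // _; rewrite divr_ge0 // exprn_ge0 // ltW.
have [l [/allP l_on l_mass l_mom]] := exists_atoms_moments rho_gt0 K_ge0 e_le.
have l_nth (j : 'I_(size l)) := l_on _ (mem_nth (0, 0) (ltn_ord j)).
exists (size l), (fun j => (nth (0, 0) l j).2), (fun j => (nth (0, 0) l j).1).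
split; [|split; [|split]].
- by move=> j; case/andP: (l_nth j) => _ /eqP.
- by move=> j; case/andP: (l_nth j).
- have -> : \sum_(j < size l) (nth (0, 0) l j).1 = mass l.
    by rewrite /mass (big_nth (0, 0)) big_mkord.
  by apply: le_trans l_mass _; rewrite /bn /K; case: ifP; rewrite // mulrAC mulrA.
- move=> k; have := l_mom k.+1 (ltn_ord k); rewrite /= valK /= => <-.
  by rewrite /moment (big_nth (0, 0)) big_mkord.
Qed.
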